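(* For all $p\in\mathbb N=\{0,1,2,\dots\}$, $\zeta\in\{0,1\}$ and $0\le k\le n$, $$E_{n,k}(-1,2;\,2-\zeta+2p,\ \zeta-2p)=n!\binom{n+1}{2k+2p+1-\zeta}-(-1)^{k+p}\sum_{\ell=0}^{p-1}(-1)^\ell(2-\zeta+2\ell)^{\overline n}\binom{n+1}{k+p-\ell}.$$
   Context: Generalized Eulerian numbers $E_{n,k}(a,b;c_0,c_\infty)$: defined by $E_{0,0}=1$, $E_{n,k}=0$ if $n<0$, $k<0$ or $k>n$, and $E_{n+1,k+1}=[-an+b(k+1)+c_0]E_{n,k+1}+[(a+b)n-bk+c_\infty]E_{n,k}$ for $n\ge0$, $k\in\mathbb Z$. $x^{\overline n}=x(x+1)\cdots(x+n-1)$; $\binom{m}{j}=0$ if $j<0$ or $j>m$. *)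

From mathcomp Require Import all_boot all_order all_algebra.
Set Implicit Arguments. Unset Strict Implicit. Unset Printing Implicit Defensive.
Import Order.TTheory GRing.Theory Num.Theory.
Local Open Scope ring_scope.

(* Only indices 0 <= k are represented (k : nat); E_{n,k} = 0 for k < 0 is
   built in: the recurrence at k+1 = 0 reads E_{n+1,0} = (-a n + c0) E_{n,0}. *)
Fixpoint genEuler (a b c0 cinf : int) (n k : nat) {struct n} : int :=
  match n with
  | 0%N => if k is 0%N then 1 else 0
  | n'.+1 =>
      match k with
      | 0%N => (- a * n'%:Z + c0) * genEuler a b c0 cinf n' 0
      | k'.+1 =>
          (- a * n'%:Z + b * k'.+1%:Z + c0) * genEuler a b c0 cinf n' k'.+1
          + ((a + b) * n'%:Z - b * k'%:Z + cinf) * genEuler a b c0 cinf n' k'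
      end
  end.

Definition rising (x : int) (n : nat) : int := \prod_(i < n) (x + (i : nat)%:Z).

From mathcomp Require Import all_boot all_order all_algebra.
From mathcomp Require Import ring zify.
Import Order.TTheory GRing.Theory Num.Theory.
Local Open Scope ring_scope.

(* Take a = -1, b = 2. Column 0 is then the rising factorial c0^(n), and the
   recurrence satisfies the shift identity
     E_{n,k}(c0 + 2, -c0) = E_{n,k+1}(c0, 2 - c0) + (-1)^k c0^(n) C(n+1, k+1),
   which follows by induction on n from (k+2) C(n+1,k+2) = (n-k) C(n+1,k+1).
   For p = 0 the parameters (2 - z, z) give E_{n,k} = n! C(n+1, 2k+1-z), because
   n! C(n+1, i) satisfies the same recurrence. Raising p by one is one
   application of the shift, which contributes one more term to the
   alternating sum. *)

Lemma risingS x n : rising x n.+1 = rising x n * (x + n%:Z).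
Proof. by rewrite /rising big_ord_recr. Qed.

Lemma mulz_bin_left m k :
  k.+1%:Z * ('C(m, k.+1))%:Z = (m%:Z - k%:Z) * ('C(m, k))%:Z.
Proof.
have [le_km | lt_mk] := leqP k m.
  by rewrite -PoszM mul_bin_left PoszM subzn.
by rewrite !bin_small ?mulr0 // ltnW.
Qed.

Lemma genEuler_col0 b c0 ci n : genEuler (-1) b c0 ci n 0 = rising c0 n.
Proof.
elim: n => [|n IH]; first by rewrite /rising big_ord0.
by rewrite /= IH risingS; ring.
Qed.

Lemma genEuler_shift c0 n k :
  genEuler (-1) 2 (c0 + 2) (- c0) n k =
  genEuler (-1) 2 c0 (2 - c0) n k.+1 + (-1) ^+ k * rising c0 n * ('C(n.+1, k.+1))%:Z.
Proof.
elim: n k => [|n IH] [|k].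
- by rewrite /rising big_ord0 /= binn; ring.
- by rewrite /rising big_ord0 /= bin_small //; ring.
- by rewrite [LHS]/= IH [RHS]/= !genEuler_col0 risingS !bin1; ring.
rewrite [LHS]/= !IH [genEuler _ _ _ _ n.+1 k.+2]/= risingS (binS n.+1 k.+1) exprS.
have pascal := mulz_bin_left n.+1 k.+1.
set C1 := 'C(n.+1, k.+1) in pascal *; set C2 := 'C(n.+1, k.+2) in pascal *.
apply/eqP; rewrite -subr_eq0; apply/eqP.
transitivity (2 * (-1) ^+ k * rising c0 n *
              ((n.+1%:Z - k.+1%:Z) * C1%:Z - k.+2%:Z * C2%:Z)); first by ring.
by rewrite pascal; ring.
Qed.

Lemma fact_bin_rec n i :
  ((n.+1)`! * 'C(n.+2, i.+2))%:Z =
  (n%:Z + 3 + i%:Z) * (n`! * 'C(n.+1, i.+2))%:Z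
  + (n%:Z + 1 - i%:Z) * (n`! * 'C(n.+1, i))%:Z.
Proof.
have pascal1 := mulz_bin_left n.+1 i.+1.
have pascal0 := mulz_bin_left n.+1 i.
rewrite binS factS.
set A := 'C(n.+1, i) in pascal0 *; set B := 'C(n.+1, i.+1) in pascal0 pascal1 *.
set C := 'C(n.+1, i.+2) in pascal1 *.
apply/eqP; rewrite -subr_eq0; apply/eqP.
transitivity ((n`!)%:Z * ((i.+1%:Z * B%:Z - (n.+1%:Z - i%:Z) * A%:Z)
                       - (i.+2%:Z * C%:Z - (n.+1%:Z - i.+1%:Z) * B%:Z))); first by ring.
by rewrite pascal0 pascal1; ring.
Qed.

Lemma genEuler_fact_bin z n k : (z <= 1)%N ->
  genEuler (-1) 2 (2 - z%:Z) z%:Z n k = (n`! * 'C(n.+1, 2 * k + 1 - z))%:Z.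
Proof.
move=> z_le1; elim: n k => [|n IH] [|k].
- by case: z z_le1 => [|[|]].
- by rewrite /= bin_small //; lia.
- by rewrite /= {}IH; case: z z_le1 => [|[|]] // _; rewrite ?bin0 ?bin1 factS; ring.
rewrite [LHS]/= !IH.
have -> : (2 * k.+1 + 1 - z = (2 * k + 1 - z).+2)%N by lia.
rewrite fact_bin_rec.
have -> : (2 * k + 1 - z)%N = 2 * k%:Z + 1 - z%:Z :> int by rewrite -subzn; lia.
ring.
Qed.

Theorem mainTheorem17 (p z n k : nat) (hz : (z <= 1)%N) (hkn : (k <= n)%N) :
  genEuler (-1) 2 (2 - z%:Z + 2 * p%:Z) (z%:Z - 2 * p%:Z) n k =
    (n`!)%:Z * ('C(n.+1, 2 * k + 2 * p + 1 - z))%:Z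
    - (-1) ^+ (k + p) *
      \sum_(l < p) (-1) ^+ (l : nat) * rising (2 - z%:Z + 2 * (l : nat)%:Z) n
                   * ('C(n.+1, k + p - l))%:Z.
Proof.
elim: p k {hkn} => [|p IH] k.
  by rewrite big_ord0 !mulr0 !addr0 genEuler_fact_bin // muln0 addn0 PoszM.
have -> : 2 - z%:Z + 2 * p.+1%:Z = (2 - z%:Z + 2 * p%:Z) + 2 by ring.
have -> : z%:Z - 2 * p.+1%:Z = - (2 - z%:Z + 2 * p%:Z) by ring.
rewrite genEuler_shift.
have -> : 2 - (2 - z%:Z + 2 * p%:Z) = z%:Z - 2 * p%:Z by ring.
rewrite IH big_ord_recr /=.
have -> : (2 * k.+1 + 2 * p + 1 - z = 2 * k + 2 * p.+1 + 1 - z)%N by lia.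
have -> : (k + p.+1 - p = k.+1)%N by lia.
under eq_bigr => l _ do rewrite addSnnS.
have sign : (-1) ^+ (k + p) * (-1) ^+ p = (-1) ^+ k :> int.
  by rewrite exprD -mulrA -expr2 sqrr_sign mulr1.
by rewrite -sign (addSn k p) (addnS k p) exprS; ring.
Qed.
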